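(* Let $f$ satisfy conditions (1) and (2b), let $p>0$ and $\zeta>1$. In the expression \[ \int_0^\infty(1-2s)\,e^{-\zeta s}\sum_{n=0}^\infty c_{2n}\,p^n\sum_{k=0}^n(-1)^{n-k}\frac{(\zeta-1)^k}{(n-k)!\,(k!)^2}\,s^k\,ds \] the order of summation and integration may be reversed, for arbitrary values of $p$.
   Context: $f:[0,\infty)\to\mathbb{R}$; $c_n=2\pi\int_0^\infty f(r)\,r^{n+1}dr$. Condition (1): there is a constant $F$ with $0\le f(r)\le F$ for all $r\ge0$, $c_0$ exists and $c_0>0$. Condition (2b): $c_{2n}$ exists for all $n\in\mathbb{N}_0$ and $c_n^{1/n}=o(n^{1/2})$ as $n\to\infty$. (In the paper $\zeta=p/p'+1$ with $0<p'<p$.) *)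

From HB Require Import structures.
From mathcomp Require Import all_boot all_order all_algebra.
From mathcomp Require Import all_classical all_reals all_analysis.
Set Implicit Arguments. Unset Strict Implicit. Unset Printing Implicit Defensive.
Import Order.TTheory GRing.Theory Num.Theory.
Import numFieldNormedType.Exports.
Local Open Scope classical_set_scope.
Local Open Scope ring_scope.

Definition halfline (R : realType) : set R := `[0%R, +oo[%classic.
Arguments halfline R : clear implicits.

Definition cn (R : realType) (f : R -> R) (n : nat) : R :=
  2 * pi * Rintegral (@lebesgue_measure R) (halfline R) (fun r => f r * r ^+ n.+1).

Definition cn_exists (R : realType) (f : R -> R) (n : nat) : Prop :=
  (@lebesgue_measure R).-integrable (halfline R) (fun r => (f r * r ^+ n.+1)%:E).

Definition cond1 (R : realType) (f : R -> R) : Prop :=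
  (exists F : R, forall r : R, 0 <= r -> 0 <= f r <= F) /\
  cn_exists f 0 /\ 0 < cn f 0.

Definition cond2b (R : realType) (f : R -> R) : Prop :=
  (forall n : nat, cn_exists f (2 * n)%N) /\
  (forall eps : R, 0 < eps ->
     \forall n \near \oo, powR (cn f n) (n%:R)^-1 <= eps * Num.sqrt (n%:R)).

Definition term (R : realType) (f : R -> R) (p zeta : R) (n : nat) (s : R) : R :=
  (1 - 2 * s) * expR (- (zeta * s)) *
  (cn f (2 * n)%N * p ^+ n *
   \sum_(0 <= k < n.+1)
      ((-1) ^+ (n - k) * (zeta - 1) ^+ k /
         ((n - k)`!%:R * (k`!%:R) ^+ 2) * s ^+ k)).

(** The hypothesis [c_n^(1/n) = o(n^(1/2))] gives [c_(2n) <= (eps^2 2n)^n] eventually,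
    for every [eps > 0]; with [n^n <= n! e^n] this makes [sum c_(2n) Y^n / n!] converge
    for every [Y >= 0].  Bounding [s^k <= k! e^s] and the binomial coefficients by [2^n],
    the [n]-th summand is dominated on [0, oo[ by [3 c_(2n) (8 p zeta)^n / n!] times
    [exp (-(zeta - 1) s)], which is integrable because [zeta > 1].  Dominated convergence
    applied to the partial sums then justifies exchanging summation and integration. *)

From HB Require Import structures.
From mathcomp Require Import all_boot all_order all_algebra.
From mathcomp Require Import all_classical all_reals all_analysis.
From mathcomp Require Import ring lra measurable_realfun.
Import Order.TTheory GRing.Theory Num.Theory.
Import numFieldNormedType.Exports.
Local Open Scope classical_set_scope.
Local Open Scope ring_scope.

Lemma series_le_cvg_near (R : realType) (u v : R ^nat) :
  (forall n, 0 <= u n) -> (forall n, 0 <= v n) ->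
  (\forall n \near \oo, u n <= v n) -> cvgn (series v) -> cvgn (series u).
Proof.
move=> u_ge0 v_ge0 [N _ le_uv] cvg_v.
pose w n := if (N <= n)%N then u n else 0.
rewrite -(is_cvg_series_restrict N).
have -> : [sequence \sum_(N <= k < n) u k]_n = [sequence \sum_(N <= k < n) w k]_n.
  by apply/funext => n /=; apply: eq_big_nat => k /andP[Nk _]; rewrite /w Nk.
rewrite is_cvg_series_restrict; apply: series_le_cvg cvg_v => n; rewrite /w.
- by case: ifP.
- exact: v_ge0.
- by case: ifP => // Nn; exact: le_uv.
Qed.

Section termwise_integration.
Context {d : measure_display} {T : measurableType d} {R : realType}.
Context {mu : {measure set T -> \bar R}} {D : set T}.
Context {u : nat -> T -> R} {a : R ^nat} {g : T -> R}.
Hypothesis mD : measurable D.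
Hypothesis mfu : forall n, measurable_fun D (u n).
Hypothesis a_ge0 : forall n, 0 <= a n.
Hypothesis cvg_a : cvgn (series a).
Hypothesis g_ge0 : forall x, D x -> 0 <= g x.
Hypothesis ig : mu.-integrable D (EFin \o g).
Hypothesis u_le : forall n x, D x -> `|u n x| <= a n * g x.

Lemma cvg_series_dominated x : D x -> cvgn (series (u ^~ x)).
Proof.
move=> Dx; apply: normed_cvg.
apply: (series_le_cvg _ _ _ (is_cvg_seriesZ (k := g x) cvg_a)) => n /=.
- exact: normr_ge0.
- by rewrite scalrfctE mulr_ge0 ?g_ge0.
- by rewrite scalrfctE [_ *: _]mulrC; exact: u_le.
Qed.

Lemma norm_series_dominated N x : D x ->
  `|series (u ^~ x) N| <= limn (series a) * g x.
Proof.
move=> Dx; apply: le_trans (ler_norm_sum _ _ _) _.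
apply: (@le_trans _ _ (series a N * g x)).
  by rewrite /series /= mulr_suml; apply: ler_sum => n _; exact: u_le.
apply: ler_wpM2r; first exact: g_ge0.
by apply: nondecreasing_cvgn_le cvg_a N; exact: nondecreasing_series.
Qed.

Lemma integrable_dominated n : mu.-integrable D (fun x => (u n x)%:E).
Proof.
apply: (le_integrable mD _ _ (integrableZl mD (a n) ig)).
  by apply/measurable_EFinP; exact: mfu.
move=> x Dx /=; rewrite lee_fin (ger0_norm (mulr_ge0 (a_ge0 n) (g_ge0 _ Dx))).
exact: u_le.
Qed.

Lemma integral_partial_sum N :
  (\int[mu]_(x in D) (series (u ^~ x) N)%:E =
   (series (fun n => Rintegral mu D (u n)) N)%:E)%E.
Proof.
rewrite /series /=; under eq_integral do rewrite -sumEFin.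
rewrite integral_sum //; last exact: integrable_dominated.
rewrite -sumEFin; apply: eq_bigr => n _.
by rewrite /Rintegral fineK //; exact: integrable_fin_num (integrable_dominated n).
Qed.

Theorem termwise_integration :
  [/\ forall x, D x -> cvgn (series (u ^~ x)),
      mu.-integrable D (fun x => (limn (series (u ^~ x)))%:E),
      forall n, mu.-integrable D (fun x => (u n x)%:E) &
      series (fun n => Rintegral mu D (u n)) @ \oo -->
        Rintegral mu D (fun x => limn (series (u ^~ x)))].
Proof.
pose S N x := series (u ^~ x) N.
have mS N : measurable_fun D (S N).
  by rewrite /S /series /=; apply: measurable_sum => n; exact: mfu.
have mlim : measurable_fun D (fun x => limn (series (u ^~ x))).
  apply: (measurable_fun_cvg (h := S)) => // x Dx.
  exact: cvg_series_dominated.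
have [|||||ilim _ cvg_int] := @dominated_convergence _ _ _ mu D mD
  (fun N x => (S N x)%:E) (fun x => (limn (series (u ^~ x)))%:E)
  (fun x => (limn (series a))%:E * (g x)%:E)%E.
- by move=> N; apply/measurable_EFinP.
- exact/measurable_EFinP.
- apply: aeW => x Dx; apply: cvg_EFin; first exact: nearW.
  exact: cvg_series_dominated.
- exact: integrableZl.
- by apply: aeW => x N Dx; rewrite -EFinM lee_fin; exact: norm_series_dominated.
split => //; [exact: cvg_series_dominated | exact: integrable_dominated |].
move: cvg_int.
have -> : (\int[mu]_(x in D) (limn (series (u ^~ x)))%:E)%E =
    (Rintegral mu D (fun x => limn (series (u ^~ x))))%:E.
  by rewrite /Rintegral fineK //; exact: integrable_fin_num.
under eq_fun do rewrite integral_partial_sum.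
by move/fine_cvg.
Qed.

End termwise_integration.

Lemma leq_bin_exp2 n k : ('C(n, k) <= 2 ^ n)%N.
Proof.
elim: n k => [|n IH] [|k] //=; first by rewrite bin0 expn_gt0.
by rewrite binS expnS mul2n -addnn leq_add.
Qed.

Lemma leq_fact_exp2 n k : (k <= n)%N -> (n`! <= 2 ^ n * (k`! * (n - k)`!))%N.
Proof. by move=> kn; rewrite -(bin_fact kn) leq_mul2r leq_bin_exp2 orbT. Qed.

Section factorial_bounds.
Context {R : realType}.

Lemma exprn_le_fact_expR (x : R) k : 0 <= x -> x ^+ k <= k`!%:R * expR x.
Proof.
move=> x0; case: k => [|k].
  by rewrite expr0 fact0 mul1r; apply: le_trans (expR_ge1Dx x); lra.
rewrite -ler_pdivrMl ?ltr0n ?fact_gt0 // mulrC.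
by apply: le_trans (expR_ge1Dxn k x0); rewrite lerDr.
Qed.

Lemma natr_exprn_le_fact (n : nat) : n%:R ^+ n <= n`!%:R * expR 1 ^+ n :> R.
Proof. by rewrite -expRM_natl mulr1; exact: exprn_le_fact_expR. Qed.

Lemma poly_le_fact_expR (s : R) k : 0 <= s ->
  (1 + 2 * s) * s ^+ k <= 3 * k.+1%:R * k`!%:R * expR s.
Proof.
move=> s0; have le_k := exprn_le_fact_expR _ k s0.
have := exprn_le_fact_expR _ k.+1 s0; rewrite exprS factS natrM => le_kS.
have : k`!%:R * expR s <= k.+1%:R * k`!%:R * expR s.
  by rewrite -mulrA ler_peMl ?ler1n // mulr_ge0 ?expR_ge0.
lra.
Qed.

Lemma binomial_coef_le (z : R) n k : 1 <= z -> (k <= n)%N ->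
  (z - 1) ^+ k / ((n - k)`!%:R * k`!%:R) <= (2 * z) ^+ n / n`!%:R.
Proof.
move=> z1 kn.
rewrite ler_pdivrMr ?mulr_gt0 ?ltr0n ?fact_gt0 // mulrAC ler_pdivlMr ?ltr0n ?fact_gt0 //.
rewrite exprMn -mulrA [(2 ^+ n * _)]mulrC -mulrA.
apply: ler_pM; rewrite ?exprn_ge0 ?ler0n //.
- lra.
- apply: (@le_trans _ _ (z ^+ k)).
    by apply: lerXn2r; rewrite ?nnegrE; lra.
  exact: ler_weXn2l.
- by rewrite mulrC -natrX -!natrM ler_nat [(_ * k`!)%N]mulnC leq_fact_exp2.
Qed.

End factorial_bounds.

Section halfline.
Context {R : realType}.

Lemma in_halfline (s : R) : halfline R s <-> 0 <= s.
Proof. by rewrite /halfline /= in_itv /= andbT. Qed.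

Lemma integrable_expR_halfline (a : R) : 0 < a ->
  lebesgue_measure.-integrable (halfline R) (EFin \o (fun s => expR (- (a * s)))).
Proof.
move=> a0.
have ipdf := integrable_exponential_pdf a0.
have ihalf : lebesgue_measure.-integrable (halfline R) (EFin \o exponential_pdf a).
  by apply: integrableS ipdf => //; exact: measurable_itv.
have : lebesgue_measure.-integrable (halfline R)
    (fun s => (a^-1)%:E * (EFin \o exponential_pdf a) s)%E.
  by apply: integrableZl => //; exact: measurable_itv.
apply: eq_integrable; first exact: measurable_itv.
move=> s /[!inE] /in_halfline s0.
by rewrite /= exponential_pdfE // -EFinM mulrA mulVf ?gt_eqF // mul1r mulNr.
Qed.

End halfline.

Section moments.
Context {R : realType}.
Variable f : R -> R.
Hypothesis f_ge0 : forall r, 0 <= r -> 0 <= f r.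

Lemma cn_ge0 n : 0 <= cn f n.
Proof.
rewrite /cn mulr_ge0 ?mulr_ge0 ?pi_ge0 //.
apply: Rintegral_ge0 => r /in_halfline r0.
by rewrite mulr_ge0 ?f_ge0 ?exprn_ge0.
Qed.

Hypothesis f_cond2b : cond2b f.

Lemma cn_even_le (eps : R) : 0 < eps ->
  \forall n \near \oo, cn f (2 * n) <= (eps ^+ 2 * (2 * n)%:R) ^+ n.
Proof.
move=> eps0; have [_ root_le] := f_cond2b.
have [N _ root_le_N] := root_le eps eps0.
exists N.+1 => // n /= Nn.
have n2_gt0 : (0 < 2 * n)%N by rewrite muln_gt0 (leq_trans _ Nn).
have -> : cn f (2 * n) = powR (cn f (2 * n)) (2 * n)%:R^-1 ^+ (2 * n).
  by rewrite -powR_mulrn ?powR_ge0 // -powRrM mulVf ?powRr1 ?cn_ge0 // pnatr_eq0 -lt0n.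
have -> : eps ^+ 2 * (2 * n)%:R = (eps * Num.sqrt (2 * n)%:R) ^+ 2.
  by rewrite exprMn sqr_sqrtr ?ler0n.
rewrite -exprM.
apply: lerXn2r; rewrite ?nnegrE ?powR_ge0 ?mulr_ge0 ?sqrtr_ge0 ?(ltW eps0) //.
by apply: root_le_N; rewrite /= (leq_trans (ltnW Nn)) // leq_pmull.
Qed.

Lemma cvg_series_cn_even (Y : R) : 0 <= Y ->
  cvgn (series (fun n => cn f (2 * n) * Y ^+ n / n`!%:R)).
Proof.
move=> Y0; pose E : R := expR 1.
have E_ge1 : 1 <= E by apply: le_trans (expR_ge1Dx 1); lra.
(* [eps] makes [2 eps^2 e Y <= 1/2], so that the terms are eventually below [2^-n]. *)
pose eps := (4 * E * (1 + Y))^-1.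
have den_ge1 : 1 <= 4 * E * (1 + Y) by nra.
have eps0 : 0 < eps by rewrite invr_gt0; lra.
have eps_le1 : eps <= 1 by rewrite invf_le1 //; lra.
have epsEY_le : eps * E * Y <= 4^-1.
  have : eps * (4 * E * (1 + Y)) = 1 by rewrite mulVf // gt_eqF //; lra.
  have : 0 <= eps * E by rewrite mulr_ge0 //; lra.
  lra.
have ratio_le : 2 * eps ^+ 2 * Y * E <= 2^-1 by nra.
apply: (@series_le_cvg_near _ _ (geometric 1 2^-1)).
- by move=> n; rewrite divr_ge0 ?ler0n // mulr_ge0 ?exprn_ge0 ?cn_ge0.
- by move=> n; rewrite /geometric /= mul1r exprn_ge0.
- have := cn_even_le _ eps0; apply: filterS => n c_le; rewrite /geometric /= mul1r.
  have fact_gt0' : 0 < n`!%:R :> R by rewrite ltr0n fact_gt0.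
  apply: (@le_trans _ _ ((2 * eps ^+ 2 * Y) ^+ n * (n%:R ^+ n / n`!%:R))).
    rewrite (_ : _ * (_ / _) = (eps ^+ 2 * (2 * n)%:R) ^+ n * Y ^+ n / n`!%:R).
      by rewrite ler_wpM2r ?invr_ge0 ?ler0n // ler_wpM2r ?exprn_ge0.
    by rewrite natrM !exprMn; ring.
  have nn_le : n%:R ^+ n / n`!%:R <= E ^+ n.
    by rewrite ler_pdivrMr // mulrC natr_exprn_le_fact.
  have base_ge0 : 0 <= 2 * eps ^+ 2 * Y by rewrite !mulr_ge0 // ltW.
  apply: le_trans (ler_wpM2l (exprn_ge0 n base_ge0) nn_le) _.
  by rewrite -exprMn; apply: lerXn2r; rewrite ?nnegrE ?mulr_ge0 //; lra.
- by apply: is_cvg_geometric_series; rewrite ger0_norm; lra.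
Qed.

End moments.

Section term_bound.
Context {R : realType}.

Lemma measurable_term (f : R -> R) p z n (D : set R) : measurable_fun D (term f p z n).
Proof.
apply: measurable_funM; first apply: measurable_funM.
- apply: measurable_funB; first exact: measurable_cst.
  by apply: measurable_funM; [exact: measurable_cst|exact: measurable_id].
- apply: measurableT_comp; first exact: measurable_expR.
  apply: measurable_funN.
  by apply: measurable_funM; [exact: measurable_cst|exact: measurable_id].
- apply: measurable_funM; first exact: measurable_cst.
  apply: measurable_sum => k.
  apply: measurable_funM; first exact: measurable_cst.
  exact: exprn_measurable.
Qed.

Lemma term_summand_le (z s : R) n k : 1 < z -> 0 <= s -> (k <= n)%N ->
  (1 + 2 * s) * expR (- (z * s)) *
  `|(-1) ^+ (n - k) * (z - 1) ^+ k / ((n - k)`!%:R * (k`!%:R) ^+ 2) * s ^+ k|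
  <= 3 * (4 * z) ^+ n / n`!%:R * expR (- ((z - 1) * s)).
Proof.
move=> z1 s0 kn.
have fact_gt0' m : 0 < m`!%:R :> R by rewrite ltr0n fact_gt0.
set c := (z - 1) ^+ k / ((n - k)`!%:R * k`!%:R).
have c_ge0 : 0 <= c by rewrite divr_ge0 ?exprn_ge0 ?mulr_ge0 ?ler0n //; lra.
have poly_le : (1 + 2 * s) * s ^+ k / k`!%:R <= 3 * 2 ^+ n * expR s.
  rewrite ler_pdivrMr //; apply: le_trans (poly_le_fact_expR s k s0) _.
  have kS_le : k.+1%:R <= 2 ^+ n :> R.
    by rewrite -natrX ler_nat (leq_ltn_trans kn) // ltn_expl.
  by rewrite [X in _ <= X]mulrAC ler_pM2r ?expR_gt0 // ler_pM2r // ler_pM2l.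
have -> : (-1) ^+ (n - k) * (z - 1) ^+ k / ((n - k)`!%:R * (k`!%:R) ^+ 2) * s ^+ k
    = (-1) ^+ (n - k) * (c * (s ^+ k / k`!%:R)).
  by rewrite /c; field; rewrite !gt_eqF.
rewrite normrM normrX normrN1 expr1n mul1r ger0_norm; last first.
  by rewrite mulr_ge0 // divr_ge0 ?exprn_ge0 ?ler0n.
have -> : (1 + 2 * s) * expR (- (z * s)) * (c * (s ^+ k / k`!%:R))
    = c * ((1 + 2 * s) * s ^+ k / k`!%:R) * expR (- (z * s)) by ring.
have poly_ge0 : 0 <= (1 + 2 * s) * s ^+ k / k`!%:R.
  by rewrite divr_ge0 ?mulr_ge0 ?exprn_ge0 ?ler0n //; lra.
have coef_le := binomial_coef_le z n k (ltW z1) kn.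
apply: le_trans (ler_wpM2r (expR_ge0 _) (ler_pM c_ge0 poly_ge0 coef_le poly_le)) _.
have -> : expR (- ((z - 1) * s)) = expR s * expR (- (z * s)).
  by rewrite -expRD; congr expR; ring.
rewrite (_ : 4 * z = 2 * (2 * z)) ?exprMn; last by ring.
by rewrite le_eqVlt; apply/orP; left; apply/eqP; ring.
Qed.

Lemma term_le (f : R -> R) p z n s :
  (forall r, 0 <= r -> 0 <= f r) -> 0 < p -> 1 < z -> 0 <= s ->
  `|term f p z n s| <=
    3 * (cn f (2 * n) * (8 * p * z) ^+ n / n`!%:R) * expR (- ((z - 1) * s)).
Proof.
move=> f_ge0 p0 z1 s0; rewrite /term.
set S := \sum_(0 <= k < n.+1) _.
set C := cn f (2 * n) * p ^+ n.
set e := expR (- (z * s)).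
set B := 3 * (4 * z) ^+ n / n`!%:R * expR (- ((z - 1) * s)).
have C_ge0 : 0 <= C by rewrite mulr_ge0 ?cn_ge0 ?exprn_ge0 ?ltW.
have sum_le : (1 + 2 * s) * e * `|S| <= 2 ^+ n * B.
  apply: le_trans (ler_wpM2l _ (ler_norm_sum _ _ _)) _.
    by rewrite mulr_ge0 ?expR_ge0 //; lra.
  rewrite mulr_sumr; apply: (@le_trans _ _ (\sum_(0 <= k < n.+1) B)).
    by apply: ler_sum_nat => k /andP[_ kn]; exact: term_summand_le.
  rewrite sumr_const_nat subn0 -[B *+ _]mulr_natl; apply: ler_wpM2r.
    by rewrite /B !mulr_ge0 ?invr_ge0 ?exprn_ge0 ?expR_ge0 ?ler0n //; lra.
  by rewrite -natrX ler_nat ltn_expl.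
have abs_le : `|1 - 2 * s| <= 1 + 2 * s by rewrite ler_norml; apply/andP; split; lra.
rewrite normrM normrM (ger0_norm (expR_ge0 _)) normrM (ger0_norm C_ge0).
apply: (@le_trans _ _ (C * ((1 + 2 * s) * e * `|S|))).
  rewrite [X in X <= _](_ : _ = C * (`|1 - 2 * s| * e * `|S|)); last by rewrite /e; ring.
  by apply: ler_wpM2l => //; apply: ler_wpM2r => //; apply: ler_wpM2r; rewrite ?expR_ge0.
apply: le_trans (ler_wpM2l C_ge0 sum_le) _.
rewrite /C /B (_ : 8 * p * z = 2 * p * (4 * z)); last by ring.
by rewrite !exprMn le_eqVlt; apply/orP; left; apply/eqP; ring.
Qed.

End term_bound.

Theorem lemma9 (R : realType) (f : R -> R) (p zeta : R) :
  cond1 f -> cond2b f -> 0 < p -> 1 < zeta ->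
  (* the inner series converges for every s >= 0 *)
  (forall s : R, 0 <= s -> cvgn (series (fun n => term f p zeta n s))) /\
  (* the integrand (sum of the series) is integrable on [0, oo[ *)
  (@lebesgue_measure R).-integrable (halfline R)
     (fun s => (limn (series (fun n => term f p zeta n s)))%:E) /\
  (* every summand is integrable on [0, oo[ *)
  (forall n : nat, (@lebesgue_measure R).-integrable (halfline R)
     (fun s => (term f p zeta n s)%:E)) /\
  (* summing the termwise integrals gives the integral of the sum *)
  series (fun n => Rintegral (@lebesgue_measure R) (halfline R) (term f p zeta n))
    @ \oo --> Rintegral (@lebesgue_measure R) (halfline R)
                (fun s => limn (series (fun n => term f p zeta n s))).
Proof.
move=> [[F f_bounded] _] f_cond2b p0 z1.
have f_ge0 r : 0 <= r -> 0 <= f r by move=> r0; case/andP: (f_bounded r r0).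
pose a n := 3 * (cn f (2 * n) * (8 * p * zeta) ^+ n / n`!%:R).
have zeta1_gt0 : 0 < zeta - 1 by rewrite subr_gt0.
have pzeta_ge0 : 0 <= 8 * p * zeta by nra.
have a_ge0 n : 0 <= a n.
  by rewrite mulr_ge0 // divr_ge0 ?ler0n // mulr_ge0 ?exprn_ge0 ?cn_ge0.
have cvg_a : cvgn (series a) by apply: is_cvg_seriesZ; exact: cvg_series_cn_even.
(* plain [measurable] would use the default display on [R], not that of [lebesgue_measure] *)
have mH : (R.-ocitv.-measurable).-sigma.-measurable (halfline R).
  exact: measurable_itv.
have term_le_a n s : halfline R s ->
    `|term f p zeta n s| <= a n * expR (- ((zeta - 1) * s)).
  by move=> /in_halfline s0; exact: term_le.
have [cvg_pt int_lim int_term cvg_int] := termwise_integration mH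
  (fun n => measurable_term f p zeta n _) a_ge0 cvg_a (fun s _ => expR_ge0 _)
  (integrable_expR_halfline _ zeta1_gt0) term_le_a.
split=> [s s0|]; first by apply: cvg_pt; exact/in_halfline.
by split; [|split].
Qed.
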